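(* With framed arithmetic divisors $(L,\xi,\tau)$ ($L$ torsion-free rank 1, $\xi:L\to\widehat{\mathbf{Z}}$ generating $\operatorname{Hom}(L,\widehat{\mathbf{Z}})$ as a $\widehat{\mathbf{Z}}$-module, $\tau:L\to\mathbf{R}$ a homomorphism) and isomorphisms $\phi:L\xrightarrow{\sim}L'$ with $\xi'\circ\phi=\xi$, $\tau'\circ\phi=\tau$, define the tensor product $(L_1,\xi_1,\tau_1)\otimes(L_2,\xi_2,\tau_2)=(L_1\otimes_\mathbf{Z}L_2,\xi,\tau)$ by $\xi(x\otimes y)=\xi_1(x)\xi_2(y)$ (product in $\widehat{\mathbf{Z}}$) and $\tau(x\otimes y)=\tau_1(x)\tau_2(y)$. Let $\operatorname{Pic}_{Fr}(\overline{\operatorname{Spec}\mathbf{Z}})$ be the set of isomorphism classes. For $a=(a_f,a_\infty)\in\mathbb{A}$ (adeles of $\mathbf{Q}$) let $D_a=(L_a,\xi_a,\tau_a)$ with $L_a=\{q\in\mathbf{Q}\mid qa_f\in\widehat{\mathbf{Z}}\}$, $\xi_a(x)=xa_f$, $\tau_a(x)=xa_\infty$. Then the bijection $Y_\mathbf{Q}=\mathbf{Q}^\times\backslash\mathbb{A}\to\operatorname{Pic}_{Fr}(\overline{\operatorname{Spec}\mathbf{Z}})$, $[a]\mapsto[D_a]$, is an isomorphism of monoids: for $a,b\in\mathbb{A}$, $D_{ab}\cong D_a\otimes D_b$. *)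

From mathcomp Require Import all_boot all_algebra.
From mathcomp Require Import reals.
Import GRing.Theory Num.Theory.

Set Implicit Arguments.
Unset Strict Implicit.
Unset Printing Implicit Defensive.

Local Open Scope ring_scope.

(* An element is a compatible family of residues: [c n] is the residue *)
(* modulo n.+1 (normalized in [0, n]), and for n.+1 | m.+1 the residue *)
(* modulo m.+1 reduces to the residue modulo n.+1.                     *)

Definition zhat_ax (c : nat -> int) : Prop :=
  forall n m : nat, (n.+1 %| m.+1)%N -> modz (c m) n.+1 = c n.

Definition zhat := {c : nat -> int | zhat_ax c}.

Definition zres (x : zhat) : nat -> int := proj1_sig x.

Lemma modz_dvdm_nat (k : int) (n m : nat) :
  (n %| m)%N -> modz (modz k m) n = modz k n.
Proof.
move=> /dvdnP [t ->].
by rewrite {2}(divz_eq k (t * n)%N) PoszM mulrA modzMDl.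
Qed.

Lemma zofint_ax (k : int) : zhat_ax (fun n => modz k n.+1).
Proof. by move=> n m nm; rewrite modz_dvdm_nat. Qed.

Definition zofint (k : int) : zhat := exist _ _ (zofint_ax k).

Lemma zmul_ax (x y : zhat) :
  zhat_ax (fun n => modz (zres x n * zres y n) n.+1).
Proof.
case: x => [c hc]; case: y => [d hd] n m nm /=.
rewrite modz_dvdm_nat // -modzMm.
by rewrite (hc _ _ nm) (hd _ _ nm).
Qed.

Definition zmul (x y : zhat) : zhat := exist _ _ (zmul_ax x y).

(* x / d with x in Zhat and d a positive integer; we work with such    *)
(* representatives.  Two representatives x/d and y/e denote the same   *)
(* finite adele iff e*x = d*y in Zhat (Zhat is torsion free).          *)

Record fadele := FAdele {
  fa_num : zhat;
  fa_den : nat;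
  fa_den_gt0 : (0 < fa_den)%N }.

Definition fa_eq (a b : fadele) : Prop :=
  zmul (zofint (fa_den b)) (fa_num a) = zmul (zofint (fa_den a)) (fa_num b).

Definition fa_of_zhat (z : zhat) : fadele := @FAdele z 1 isT.

Lemma fa_mul_den_gt0 (a b : fadele) : (0 < fa_den a * fa_den b)%N.
Proof. by rewrite muln_gt0 !fa_den_gt0. Qed.

Definition fa_mul (a b : fadele) : fadele :=
  FAdele (zmul (fa_num a) (fa_num b)) (fa_mul_den_gt0 a b).

Lemma fa_scale_den_gt0 (q : rat) (a : fadele) :
  (0 < absz (denq q) * fa_den a)%N.
Proof. by rewrite muln_gt0 fa_den_gt0 absz_gt0 denq_neq0. Qed.

Definition fa_scale (q : rat) (a : fadele) : fadele :=
  FAdele (zmul (zofint (numq q)) (fa_num a)) (fa_scale_den_gt0 q a).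

Record adele (R : realType) := Adele { a_fin : fadele; a_inf : R }.

Definition adele_mul (R : realType) (a b : adele R) : adele R :=
  Adele (fa_mul (a_fin a) (a_fin b)) (a_inf a * a_inf b).

(* [xi_is a q z] means  q * a_f = z  (as finite adeles), z in Zhat;    *)
(* since Zhat is torsion free such z is unique, so this is the graph   *)
(* of xi_a on L_a.                                                     *)

Definition xi_is (R : realType) (a : adele R) (q : rat) (z : zhat) : Prop :=
  fa_eq (fa_scale q (a_fin a)) (fa_of_zhat z).

Definition L_ (R : realType) (a : adele R) (q : rat) : Prop :=
  exists z : zhat, xi_is a q z.

Definition tau_ (R : realType) (a : adele R) (q : rat) : R :=
  ratr q * a_inf a.

(* Tensor products of subgroups of Q, via the universal property.      *)

Definition bilinear_on (P Q : rat -> Prop) (M : zmodType)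
    (f : rat -> rat -> M) : Prop :=
  (forall x1 x2 y, P x1 -> P x2 -> Q y -> f (x1 + x2) y = f x1 y + f x2 y) /\
  (forall x y1 y2, P x -> Q y1 -> Q y2 -> f x (y1 + y2) = f x y1 + f x y2).

Definition additive_on (T : rat -> Prop) (M : zmodType) (g : rat -> M) : Prop :=
  forall s t, T s -> T t -> g (s + t) = g s + g t.

Definition is_tensor (P Q T : rat -> Prop) (beta : rat -> rat -> rat) : Prop :=
  [/\ (forall x y, P x -> Q y -> T (beta x y)),
      bilinear_on P Q beta &
      forall (M : zmodType) (f : rat -> rat -> M), bilinear_on P Q f ->
        exists g : rat -> M,
          [/\ additive_on T g,
              (forall x y, P x -> Q y -> g (beta x y) = f x y) &
              (forall g' : rat -> M, additive_on T g' ->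
                 (forall x y, P x -> Q y -> g' (beta x y) = f x y) ->
                 forall t, T t -> g' t = g t)]].

(* D_c is isomorphic, as a framed arithmetic divisor, to D_a (x) D_b:   *)
(* L_c is the tensor product of L_a and L_b via some beta (so that     *)
(* x (x) y |-> beta x y is a group isomorphism L_a (x) L_b ~ L_c),      *)
(* and this isomorphism carries xi_c, tau_c to the tensor frames       *)
(* xi(x (x) y) = xi_a(x) xi_b(y), tau(x (x) y) = tau_a(x) tau_b(y).     *)
Definition framed_iso_tensor (R : realType) (c a b : adele R) : Prop :=
  exists beta : rat -> rat -> rat,
    [/\ is_tensor (L_ a) (L_ b) (L_ c) beta,
        (forall x y zx zy, xi_is a x zx -> xi_is b y zy ->
           xi_is c (beta x y) (zmul zx zy)) &
        (forall x y, L_ a x -> L_ b y ->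
           tau_ c (beta x y) = tau_ a x * tau_ b y)].

(* Any two elements of a subgroup of Q are multiples z k, z l of a common
   element with k, l coprime; hence a bilinear map f on subgroups P, Q of Q satisfies
   f x y = f x' y' whenever x y = x' y', and multiplication P x Q -> P Q is a tensor product.
   It remains to see that L_AB = L_A L_B.  The inclusion L_A L_B <= L_AB is the
   multiplicativity of xi.  Conversely, for t = u / v in L_AB put K = v d_A d_B and
   G = gcd (x_A mod K, K): then d_A / G lies in L_A, and u G / (v d_A) lies in L_B because,
   by Bezout, G is a combination of x_A and K while K divides u x_A x_B. *)

From mathcomp Require Import all_boot all_order all_algebra.
From mathcomp Require Import reals.
From mathcomp Require Import ring.
From Stdlib Require Import ClassicalEpsilon FunctionalExtensionality ProofIrrelevance.
Import Order.TTheory GRing.Theory Num.Theory.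

Set Implicit Arguments.
Unset Strict Implicit.
Unset Printing Implicit Defensive.

Local Open Scope ring_scope.

Definition rat_subgroup (P : rat -> Prop) : Prop :=
  [/\ P 0, forall x y, P x -> P y -> P (x + y) & forall x, P x -> P (- x)].

Section RatSubgroup.

Variable P : rat -> Prop.
Hypothesis subP : rat_subgroup P.

Lemma rat_subgroupMz k x : P x -> P (x *~ k).
Proof.
case: subP => P0 PD PN Px.
have PMn n : P (x *+ n) by elim: n => [|n IH]; rewrite ?mulr0n // mulrS; apply: PD.
case: k => n; first exact: PMn.
by rewrite NegzE mulrNz; apply: PN; apply: PMn.
Qed.

Lemma additive_onMz (M : zmodType) (g : rat -> M) k x :
  additive_on P g -> P x -> g (x *~ k) = g x *~ k.
Proof.
case: subP => P0 _ PN gD Px.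
have g0 : g 0 = 0 by apply: (@addrI _ (g 0)); rewrite -gD // !addr0.
have gN y : P y -> g (- y) = - g y.
  by move=> Py; apply: (@addrI _ (g y)); rewrite -gD ?subrr ?g0 //; apply: PN.
have gMn n : g (x *+ n) = g x *+ n.
  by elim: n => [|n IH]; rewrite ?mulr0n // !mulrS gD ?IH //; exact: (rat_subgroupMz n Px).
case: k => n; first exact: gMn.
by rewrite NegzE !mulrNz gN ?gMn //; exact: (rat_subgroupMz n.+1 Px).
Qed.

Lemma rat_subgroup_coprime_multiples k l x y :
  coprimez k l -> P x -> P y -> x *~ l = y *~ k ->
  exists2 z, P z & x = z *~ k /\ y = z *~ l.
Proof.
move=> /coprimezP [[u v] /= uv1] Px Py; rewrite -(mulrzr x) -(mulrzr y) => xly.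
have uv : u%:~R * k%:~R + v%:~R * l%:~R = 1 :> rat by rewrite -!intrM -intrD uv1.
exists (x *~ u + y *~ v); first by case: subP => _ PD _; apply: PD; apply: rat_subgroupMz.
rewrite -(mulrzr x) -(mulrzr y) -!(mulrzr (_ + _)); split.
- transitivity (x * (u%:~R * k%:~R + v%:~R * l%:~R)); first by rewrite uv mulr1.
  by rewrite mulrDr (mulrC v%:~R) !mulrA xly; ring.
- transitivity (y * (u%:~R * k%:~R + v%:~R * l%:~R)); first by rewrite uv mulr1.
  by rewrite mulrDr (mulrC u%:~R) !mulrA -xly; ring.
Qed.

Lemma rat_subgroup_common_generator x y : P x -> P y ->
  exists z k l, [/\ P z, coprimez k l, x = z *~ k & y = z *~ l].
Proof.
move=> Px Py; have [->|x0] := eqVneq x 0.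
  by exists y, 0, 1; rewrite mulr0z mulr1z.
set q := y / x.
have xqy : x *~ numq q = y *~ denq q.
  by rewrite -(mulrzr x) -(mulrzr y) numqE mulrA [x * q]mulrC divfK.
have cop : coprimez (denq q) (numq q) by rewrite coprimez_sym; exact: coprime_num_den.
have [z Pz [xE yE]] := rat_subgroup_coprime_multiples cop Px Py xqy.
by exists z, (denq q), (numq q).
Qed.

End RatSubgroup.

Section BilinearOnRatSubgroups.

Variables (P Q : rat -> Prop) (M : zmodType) (f : rat -> rat -> M).
Hypotheses (subP : rat_subgroup P) (subQ : rat_subgroup Q) (fbil : bilinear_on P Q f).

Lemma bilinear_onMzl k x y : P x -> Q y -> f (x *~ k) y = f x y *~ k.
Proof.
move=> Px Qy; apply: (additive_onMz subP (g := f^~ y)) => // s t Ps Pt.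
exact: fbil.1.
Qed.

Lemma bilinear_onMzr k x y : P x -> Q y -> f x (y *~ k) = f x y *~ k.
Proof.
move=> Px Qy; apply: (additive_onMz subQ (g := f x)) => // s t Qs Qt.
exact: fbil.2.
Qed.

Lemma bilinear_on_mul_eq x y x' y' : P x -> Q y -> P x' -> Q y' ->
  x * y = x' * y' -> f x y = f x' y'.
Proof.
move=> Px Qy Px' Qy' xy.
have [z [k [l [Pz kl xE x'E]]]] := rat_subgroup_common_generator subP Px Px'.
have [z0|nz0] := eqVneq z 0.
  have f0 w : Q w -> f 0 w = 0.
    case: subP => P0 _ _ Qw.
    by have := bilinear_onMzl 0 P0 Qw; rewrite !mulr0z.
  by rewrite xE x'E z0 !mul0rz !f0.
have ykly : y *~ k = y' *~ l.
  by apply: (mulfI nz0); rewrite !mulrzAr -!mulrzAl -xE -x'E.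
have lk : coprimez l k by rewrite coprimez_sym.
have [w Qw [yE y'E]] := rat_subgroup_coprime_multiples subQ lk Qy Qy' ykly.
have Qwl : Q (w *~ l) by apply: rat_subgroupMz.
have Qwk : Q (w *~ k) by apply: rat_subgroupMz.
by rewrite xE x'E yE y'E !bilinear_onMzl // !bilinear_onMzr // mulrzAC.
Qed.

End BilinearOnRatSubgroups.

Lemma mul_is_tensor (P Q T : rat -> Prop) :
  rat_subgroup P -> rat_subgroup Q ->
  (forall t, T t <-> exists x y, [/\ P x, Q y & t = x * y]) ->
  is_tensor P Q T *%R.
Proof.
move=> subP subQ Tprod; split.
- by move=> x y Px Qy; apply/Tprod; exists x, y.
- by split=> *; rewrite ?mulrDl ?mulrDr.
move=> M f fbil.
pose factors t (p : rat * rat) := [/\ P p.1, Q p.2 & t = p.1 * p.2].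
pose g t := let p := epsilon (inhabits (0, 0)) (factors t) in f p.1 p.2.
have gE x y : P x -> Q y -> g (x * y) = f x y.
  move=> Px Qy; have := epsilon_spec (inhabits (0, 0)) (factors (x * y))
    (ex_intro _ (x, y) (And3 Px Qy erefl)).
  rewrite /g /=; case: (epsilon _ _) => x' y' [/= Px' Qy' xy].
  exact: (bilinear_on_mul_eq subP subQ fbil Px' Qy' Px Qy (esym xy)).
exists g; split => //.
- move=> s t /Tprod [x1 [y1 [Px1 Qy1 ->]]] /Tprod [x2 [y2 [Px2 Qy2 ->]]].
  have [z [k [l [Qz _ y1E y2E]]]] := rat_subgroup_common_generator subQ Qy1 Qy2.
  have Px1k : P (x1 *~ k) by apply: rat_subgroupMz.
  have Px2l : P (x2 *~ l) by apply: rat_subgroupMz.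
  have Qzk : Q (z *~ k) by apply: rat_subgroupMz.
  have Qzl : Q (z *~ l) by apply: rat_subgroupMz.
  have -> : x1 * y1 + x2 * y2 = (x1 *~ k + x2 *~ l) * z.
    by rewrite y1E y2E mulrDl !mulrzAl !mulrzAr.
  rewrite y1E y2E !gE //; last by case: subP => _ PD _; apply: PD.
  by rewrite fbil.1 // !(bilinear_onMzl subP fbil) // !(bilinear_onMzr subQ fbil).
- by move=> g' _ g'E t /Tprod [x [y [Px Qy ->]]]; rewrite g'E ?gE.
Qed.

(* Elements of Zhat through unnormalized residues: [w n] is a residue modulo [n.+1]. *)
Definition zcoherent (w : nat -> int) : Prop :=
  forall n m, (n.+1 %| m.+1)%N -> (n.+1%:Z %| w m - w n)%Z.

Lemma zres_coherent (x : zhat) : zcoherent (zres x).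
Proof.
case: x => c c_ax n m nm /=; rewrite -(c_ax n m nm).
by rewrite {1}(divz_eq (c m) n.+1) addrK; apply/dvdz_mull/dvdzz.
Qed.

Lemma zhatP (x y : zhat) : (forall n, zres x n = zres y n) <-> x = y.
Proof.
split=> [|-> //]; case: x y => [c c_ax] [d d_ax] /= cd.
have {cd} cd : c = d := functional_extensionality _ _ cd.
by subst d; congr exist; apply: proof_irrelevance.
Qed.

Lemma zcoherentB (w w' : nat -> int) :
  zcoherent w -> zcoherent w' -> zcoherent (fun n => w n - w' n).
Proof.
move=> wc w'c n m nm; have -> : w m - w' m - (w n - w' n) = (w m - w n) - (w' m - w' n).
  by ring.
by rewrite rpredB ?wc ?w'c.
Qed.

Lemma zcoherentD (w w' : nat -> int) :
  zcoherent w -> zcoherent w' -> zcoherent (fun n => w n + w' n).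
Proof.
move=> wc w'c n m nm; have -> : w m + w' m - (w n + w' n) = (w m - w n) + (w' m - w' n).
  by ring.
by rewrite rpredD ?wc ?w'c.
Qed.

Lemma zcoherentMl (c : int) (w : nat -> int) :
  zcoherent w -> zcoherent (fun n => c * w n).
Proof. by move=> wc n m nm; rewrite -mulrBr dvdz_mull ?wc. Qed.

Lemma zhat_of_coherent_ax (w : nat -> int) :
  zcoherent w -> zhat_ax (fun n => (w n %% n.+1)%Z).
Proof.
move=> wc n m nm; rewrite modz_dvdm_nat //; apply/eqP.
by rewrite eqz_mod_dvd wc.
Qed.

Definition zhat_of_coherent (w : nat -> int) (wc : zcoherent w) : zhat :=
  exist _ _ (zhat_of_coherent_ax wc).

Lemma zhat_of_coherentE (w : nat -> int) (wc : zcoherent w) n :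
  (n.+1%:Z %| w n - zres (zhat_of_coherent wc) n)%Z.
Proof. by rewrite -eqz_mod_dvd /= modz_mod. Qed.

Lemma zcoherent_cancel (m : int) (w : nat -> int) : 0 < m -> zcoherent w ->
  (forall n, (n.+1%:Z %| m * w n)%Z) -> forall n, (n.+1%:Z %| w n)%Z.
Proof.
move=> m_gt0 wc mw n.
pose k := (`|m| * n.+1).-1.
have kS : k.+1 = (`|m| * n.+1)%N by rewrite prednK // muln_gt0 absz_gt0 gt_eqF.
have wk : (n.+1%:Z %| w k)%Z.
  by have := mw k; rewrite kS PoszM gtz0_abs // dvdz_mul2l // gt_eqF.
by rewrite -(rpredBl _ wk) wc // kS dvdn_mull.
Qed.

Definition zhat_dvd (k : int) (w : nat -> int) : Prop :=
  forall n, (k %| n.+1%:Z)%Z -> (k %| w n)%Z.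

Lemma zhat_dvdP (k : int) (v : nat -> int) : 0 < k -> zcoherent v ->
  zhat_dvd k v <-> exists2 w, zcoherent w & forall n, (n.+1%:Z %| v n - k * w n)%Z.
Proof.
case: k => // k; rewrite ltz_nat => k_gt0 vc; split=> [kv | [w _ vkw] n kn]; last first.
  by have := dvdz_trans kn (vkw n); rewrite rpredBr //; apply/dvdz_mulr/dvdzz.
(* The quotient at level [n] is read off at level [k (n + 1) - 1]. *)
pose B n := (k * n.+1).-1.
have BS n : (B n).+1 = (k * n.+1)%N by rewrite prednK // muln_gt0 k_gt0.
pose t n := (v (B n) %/ k)%Z.
have tk n : k%:Z * t n = v (B n).
  by rewrite mulrC divzK // kv // BS PoszM; apply/dvdz_mulr/dvdzz.
exists t => [n m nm|n].
  have /vc : ((B n).+1 %| (B m).+1)%N by rewrite !BS dvdn_pmul2l.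
  by rewrite BS PoszM -!tk -mulrBr dvdz_mul2l // gt_eqF.
by rewrite tk -opprB rpredN vc // BS dvdn_mull.
Qed.

Lemma zhat_dvd_level (k : int) (w : nat -> int) K : zcoherent w ->
  (k %| K.+1%:Z)%Z -> (k %| w K)%Z -> zhat_dvd k w.
Proof.
move=> wc kK kwK n kn.
pose m := (n.+1 * K.+1).-1.
have mS : m.+1 = (n.+1 * K.+1)%N by rewrite prednK // muln_gt0.
have Km : (K.+1 %| m.+1)%N by rewrite mS dvdn_mull.
have nm : (n.+1 %| m.+1)%N by rewrite mS dvdn_mulr.
have kwm : (k %| w m)%Z by have := dvdz_trans kK (wc K m Km); rewrite rpredBr.
by have := dvdz_trans kn (wc n m nm); rewrite rpredBl.
Qed.

Definition fa_res (A : fadele) : nat -> int := zres (fa_num A).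
Definition fa_denz (A : fadele) : int := (fa_den A)%:Z.

Lemma fa_denz_gt0 A : 0 < fa_denz A.
Proof. by rewrite ltz_nat fa_den_gt0. Qed.

(* [(p / e) A = w] in the finite adeles: for A = x / d, this says p x = e d w in Zhat. *)
Definition fa_scale_eq (A : fadele) (p e : int) (w : nat -> int) : Prop :=
  forall n, (n.+1%:Z %| p * fa_res A n - e * fa_denz A * w n)%Z.

Lemma fa_scale_eqE A q z :
  fa_eq (fa_scale q A) (fa_of_zhat z) <-> fa_scale_eq A (numq q) (denq q) (zres z).
Proof.
rewrite /fa_eq -zhatP /fa_scale_eq /=.
by split=> H n; [move/eqP: (H n) | apply/eqP; move: (H n)];
  rewrite modzMml modzMmr modzMml mul1r modzMml PoszM abszE gtr0_norm ?denq_gt0 // eqz_mod_dvd.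
Qed.

Lemma fa_scale_eqMl A (m p e : int) w : 0 < m -> zcoherent w ->
  fa_scale_eq A (m * p) (m * e) w <-> fa_scale_eq A p e w.
Proof.
move=> m_gt0 wc; split=> H n; last by have := dvdz_mull m (H n); rewrite mulrBr !mulrA.
apply: (zcoherent_cancel (w := fun n => p * fa_res A n - e * fa_denz A * w n) m_gt0).
  by apply: zcoherentB; apply: zcoherentMl => //; apply: zres_coherent.
by move=> k; rewrite mulrBr !mulrA; apply: H.
Qed.

Lemma fa_scale_eq_frac A (p e : int) q w : 0 < e -> q = p%:~R / e%:~R -> zcoherent w ->
  fa_scale_eq A p e w <-> fa_scale_eq A (numq q) (denq q) w.
Proof.
move=> e_gt0 qE wc.
have cross : denq q * p = e * numq q.
  have : (numq q)%:~R / (denq q)%:~R == p%:~R / e%:~R :> rat by rewrite divq_num_den qE.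
  rewrite eqr_div ?intr_eq0 ?denq_neq0 ?(lt0r_neq0 e_gt0) // => /eqP nepd.
  by apply: (@intr_inj rat); rewrite !intrM mulrC -nepd mulrC.
rewrite -(fa_scale_eqMl A p e (denq_gt0 q) wc) cross (mulrC (denq q)).
exact: fa_scale_eqMl.
Qed.

(* [L_ a] unfolds to [L_fin (a_fin a)]. *)
Definition L_fin (A : fadele) (q : rat) : Prop :=
  exists z : zhat, fa_eq (fa_scale q A) (fa_of_zhat z).

Lemma L_fin_coherent A (p e : int) q : 0 < e -> q = p%:~R / e%:~R ->
  L_fin A q <-> exists2 w, zcoherent w & fa_scale_eq A p e w.
Proof.
move=> e_gt0 qE; split=> [[z /fa_scale_eqE]|[w wc Hw]].
  rewrite -(fa_scale_eq_frac A e_gt0 qE (zres_coherent z)) => Hz.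
  by exists (zres z); first exact: zres_coherent.
exists (zhat_of_coherent wc); apply/fa_scale_eqE.
rewrite -(fa_scale_eq_frac A e_gt0 qE (zres_coherent _)) => n.
have -> : p * fa_res A n - e * fa_denz A * zres (zhat_of_coherent wc) n
    = (p * fa_res A n - e * fa_denz A * w n)
      + e * fa_denz A * (w n - zres (zhat_of_coherent wc) n) by ring.
by rewrite rpredD ?Hw // dvdz_mull ?zhat_of_coherentE.
Qed.

Lemma L_fin_dvd A (p e : int) q : 0 < e -> q = p%:~R / e%:~R ->
  L_fin A q <-> zhat_dvd (e * fa_denz A) (fun n => p * fa_res A n).
Proof.
move=> e_gt0 qE; rewrite (L_fin_coherent A e_gt0 qE) zhat_dvdP //.
  by rewrite mulr_gt0 ?fa_denz_gt0.
by apply: zcoherentMl; apply: zres_coherent.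
Qed.

Lemma ratE (x : rat) : x = (numq x)%:~R / (denq x)%:~R.
Proof. by rewrite divq_num_den. Qed.

Lemma L_fin_subgroup A : rat_subgroup (L_fin A).
Proof.
split.
- apply/(@L_fin_coherent A 0 1 0) => //.
  by exists (fun _ => 0) => [n m _|n]; rewrite ?mul0r ?mulr0 subrr dvdz0.
- move=> x y /(L_fin_coherent A (denq_gt0 x) (ratE x)) [wx wxc Hx].
  move=> /(L_fin_coherent A (denq_gt0 y) (ratE y)) [wy wyc Hy].
  have xyE : x + y = (numq x * denq y + numq y * denq x)%:~R / (denq x * denq y)%:~R.
    rewrite {1}(ratE x) {1}(ratE y) intrD !intrM.
    by field; rewrite !intr_eq0 !denq_neq0.
  apply/(L_fin_coherent A (mulr_gt0 (denq_gt0 x) (denq_gt0 y)) xyE).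
  exists (fun n => wx n + wy n) => [|n]; first exact: zcoherentD.
  have -> : (numq x * denq y + numq y * denq x) * fa_res A n
      - denq x * denq y * fa_denz A * (wx n + wy n)
    = denq y * (numq x * fa_res A n - denq x * fa_denz A * wx n)
      + denq x * (numq y * fa_res A n - denq y * fa_denz A * wy n) by ring.
  by rewrite rpredD ?dvdz_mull.
- move=> x /(L_fin_coherent A (denq_gt0 x) (ratE x)) [w wc Hw].
  have xE : - x = (- numq x)%:~R / (denq x)%:~R by rewrite {1}(ratE x) intrN mulNr.
  apply/(L_fin_coherent A (denq_gt0 x) xE).
  exists (fun n => - w n) => [n m nm|n]; first by rewrite -opprD rpredN wc.
  have -> : - numq x * fa_res A n - denq x * fa_denz A * - w n
    = - (numq x * fa_res A n - denq x * fa_denz A * w n) by ring.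
  by rewrite rpredN.
Qed.

Lemma fa_res_mul A B n : fa_res (fa_mul A B) n = (fa_res A n * fa_res B n %% n.+1)%Z.
Proof. by []. Qed.

Lemma fa_denz_mul A B : fa_denz (fa_mul A B) = fa_denz A * fa_denz B.
Proof. by rewrite /fa_denz /= PoszM. Qed.

Lemma fa_scale_mul A B x y zx zy :
  fa_eq (fa_scale x A) (fa_of_zhat zx) -> fa_eq (fa_scale y B) (fa_of_zhat zy) ->
  fa_eq (fa_scale (x * y) (fa_mul A B)) (fa_of_zhat (zmul zx zy)).
Proof.
move=> /fa_scale_eqE Hx /fa_scale_eqE Hy.
have xyE : x * y = (numq x * numq y)%:~R / (denq x * denq y)%:~R.
  rewrite {1}(ratE x) {1}(ratE y) !intrM.
  by field; rewrite !intr_eq0 !denq_neq0.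
apply/fa_scale_eqE.
rewrite -(fa_scale_eq_frac _ (mulr_gt0 (denq_gt0 x) (denq_gt0 y)) xyE (zres_coherent _)) => n.
rewrite fa_res_mul fa_denz_mul -eqz_mod_dvd !modzMmr eqz_mod_dvd.
rewrite mulrACA [denq x * _ * _]mulrACA [_ * (zres zx n * _)]mulrACA.
have -> : forall a b c d : int, a * c - b * d = (a - b) * c + b * (c - d).
  by move=> *; ring.
by apply: rpredD; [apply/dvdz_mulr/Hx | apply/dvdz_mull/Hy].
Qed.

Lemma L_fin_den_div_gcd A m :
  L_fin A ((fa_denz A)%:~R / (gcdz (fa_res A m) m.+1)%:~R).
Proof.
have G_gt0 : 0 < gcdz (fa_res A m) m.+1 by rewrite ltz_nat gcdn_gt0 orbT.
apply/(L_fin_dvd A G_gt0 erefl) => n Gn /=.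
rewrite mulrC dvdz_mul2r ?gt_eqF ?fa_denz_gt0 //.
have GA := zhat_dvd_level (zres_coherent (fa_num A)) (dvdz_gcdr (fa_res A m) m.+1)
  (dvdz_gcdl _ _).
exact/GA/(dvdz_trans _ Gn)/dvdz_mulr/dvdzz.
Qed.

Lemma L_fin_mul_factor A B t : L_fin (fa_mul A B) t ->
  exists x y, [/\ L_fin A x, L_fin B y & t = x * y].
Proof.
move=> /(L_fin_dvd _ (denq_gt0 t) (ratE t)); rewrite fa_denz_mul mulrA.
set u := numq t; set v := denq t; set K := v * fa_denz A * fa_denz B => Ht.
have K_gt0 : 0 < K by rewrite !mulr_gt0 ?denq_gt0 ?fa_denz_gt0.
pose m := `|K|.-1.
have mK : m.+1%:Z = K by rewrite prednK ?absz_gt0 ?gt_eqF // gtz0_abs.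
pose G := gcdz (fa_res A m) m.+1.
have G_gt0 : 0 < G by rewrite ltz_nat gcdn_gt0 orbT.
exists ((fa_denz A)%:~R / G%:~R), ((u * G)%:~R / (v * fa_denz A)%:~R); split.
- exact: L_fin_den_div_gcd.
- apply/(L_fin_dvd B (mulr_gt0 (denq_gt0 t) (fa_denz_gt0 A)) erefl) => n Kn /=.
  rewrite -/K -mK in Ht Kn *.
  have HtK : (m.+1%:Z %| u * (fa_res A n * fa_res B n))%Z.
    have modK : (m.+1%:Z %| (fa_res A n * fa_res B n %% n.+1)%Z
                            - fa_res A n * fa_res B n)%Z.
      by apply: dvdz_trans Kn _; rewrite -eqz_mod_dvd modz_mod.
    by rewrite -(rpredBl _ (Ht n Kn)) -mulrBr dvdz_mull.
  have XAmn : (m.+1%:Z %| fa_res A n - fa_res A m)%Z := zres_coherent (fa_num A) Kn.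
  have [al [be GE]] := Bezoutz (fa_res A m) m.+1.
  rewrite /G -GE.
  have -> : u * (al * fa_res A m + be * m.+1) * fa_res B n
      = al * (u * (fa_res A n * fa_res B n)) - al * u * fa_res B n * (fa_res A n - fa_res A m)
        + be * u * fa_res B n * m.+1 by ring.
  apply: rpredD; first apply: rpredB.
  + exact: dvdz_mull HtK.
  + exact: dvdz_mull XAmn.
  + exact/dvdz_mull/dvdzz.
- rewrite {1}(ratE t) -/u -/v !intrM.
  field; apply/and3P; split.
  + by rewrite pnatr_eq0 -lt0n fa_den_gt0.
  + by rewrite intr_eq0 denq_neq0.
  + by rewrite pnatr_eq0 -lt0n gcdn_gt0 orbT.
Qed.

Theorem theorem8p6 (R : realType) (a b : adele R) :
  framed_iso_tensor (adele_mul a b) a b.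
Proof.
exists *%R; split.
- apply: mul_is_tensor; [exact: L_fin_subgroup | exact: L_fin_subgroup |] => t.
  split=> [/L_fin_mul_factor // | [x [y [[zx xE] [zy yE] ->]]]].
  by exists (zmul zx zy); apply: fa_scale_mul.
- by move=> x y zx zy; apply: fa_scale_mul.
- by move=> x y _ _; rewrite /tau_ /= rmorphM /=; ring.
Qed.
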